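(* (i) Let $\mathbb{F}$ be a finite field of characteristic $2$, let $u_1,u_2,u_3$ be linearly independent vectors over $\mathbb{F}$, and let $\mathcal{X}_1=\{Y_1,Y_2,Y_3,W_1,W_2,W_3,W_4\}$ with $Y_i=\langle u_i\rangle$ ($i=1,2,3$), $W_1=\langle u_1+u_2\rangle$, $W_2=\langle u_2+u_3\rangle$, $W_3=\langle u_1+u_2+u_3\rangle$, $W_4=\langle u_1+u_3\rangle$, and $\Phi_1(\mathcal{A})=\dim\langle\mathcal{A}\rangle$ for $\mathcal{A}\subseteq\mathcal{X}_1$. Then $(\mathcal{X}_1,\Phi_1)$ is even representable but not almost odd representable. (ii) Let $\mathbb{F}'$ be a finite field of odd characteristic, let $u_1,\dots,u_5$ be linearly independent vectors over $\mathbb{F}'$, and let $\mathcal{X}_2=\{Z_1,\dots,Z_5,V_1,\dots,V_8\}$ with $Z_i=\langle u_i\rangle$ ($i=1,\dots,5$), $V_1=\langle u_1+u_2+u_3\rangle$, $V_2=\langle u_3+u_4+u_5\rangle$, $V_3=\langle u_1+u_2\rangle$, $V_4=\langle u_1+u_3\rangle$, $V_5=\langle u_2+u_3\rangle$, $V_6=\langle u_3+u_4\rangle$, $V_7=\langle u_3+u_5\rangle$, $V_8=\langle u_4+u_5\rangle$, and $\Phi_2(\mathcal{A})=\dim\langle\mathcal{A}\rangle$ for $\mathcal{A}\subseteq\mathcal{X}_2$. Then $(\mathcal{X}_2,\Phi_2)$ is odd representable but not almost even representable.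
   Context: For a set $\mathcal{A}$ of subspaces, $\langle\mathcal{A}\rangle$ is the smallest subspace containing all of them. A polymatroid $(\mathcal{X},\mathbf{h})$ with $\mathcal{X}=\{X_1,\dots,X_n\}$ is $q$-representable if there exist subspaces $V_1,\dots,V_n$ of a vector space over $\mathbb{F}_q$ with $\mathbf{h}(\{X_i:i\in\alpha\})=\dim\langle V_i:i\in\alpha\rangle$ for all $\alpha\subseteq\{1,\dots,n\}$; even representable if $2^m$-representable for some positive integer $m$; odd representable if $p^m$-representable for some odd prime $p$ and positive integer $m$. Viewing rank functions as vectors in $\mathbb{R}^{2^{|\mathcal{X}|}}$, $\mathbf{h}$ is almost even (resp. almost odd) representable if $\mathbf{h}=\lim_{i\to\infty}c_i\mathbf{g}_i$ for some even (resp. odd) representable rank functions $\mathbf{g}_i$ on $\mathcal{X}$ and positive reals $c_i$. *)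

From HB Require Import structures.
From mathcomp Require Import all_boot all_order all_algebra.
From mathcomp Require Import all_classical all_reals topology normedtype sequences.
Set Implicit Arguments. Unset Strict Implicit. Unset Printing Implicit Defensive.
Import Order.TTheory GRing.Theory Num.Theory.
Import numFieldNormedType.Exports.
Local Open Scope classical_set_scope.
Local Open Scope ring_scope.

Definition q_representable (n q : nat) (h : {set 'I_n} -> nat) : Prop :=
  exists (F : finFieldType) (vT : vectType F) (V : 'I_n -> {vspace vT}),
    #|F| = q /\ forall A : {set 'I_n}, h A = \dim (\sum_(i in A) V i)%VS.

Definition even_representable (n : nat) (h : {set 'I_n} -> nat) : Prop :=
  exists m : nat, (0 < m)%N /\ q_representable (2 ^ m) h.

Definition odd_representable (n : nat) (h : {set 'I_n} -> nat) : Prop :=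
  exists p m : nat, [/\ prime p, odd p, (0 < m)%N & q_representable (p ^ m) h].

Definition almost_even_representable (R : realType) (n : nat)
    (h : {set 'I_n} -> R) : Prop :=
  exists (g : nat -> {set 'I_n} -> nat) (c : nat -> R),
    [/\ forall k, even_representable (g k),
        forall k, 0 < c k &
        forall A : {set 'I_n}, (fun k => c k * ((g k A)%:R)) @ \oo --> h A].

Definition almost_odd_representable (R : realType) (n : nat)
    (h : {set 'I_n} -> R) : Prop :=
  exists (g : nat -> {set 'I_n} -> nat) (c : nat -> R),
    [/\ forall k, odd_representable (g k),
        forall k, 0 < c k &
        forall A : {set 'I_n}, (fun k => c k * ((g k A)%:R)) @ \oo --> h A].

Definition span_rank (F : fieldType) (vT : vectType F) (n : nat)
    (w : 'I_n -> vT) (A : {set 'I_n}) : nat :=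
  \dim (\sum_(i in A) <[w i]>)%VS.

(* X_1 = {Y1,Y2,Y3,W1,W2,W3,W4}, generators in this order. *)
Definition X1_gens (F : fieldType) (vT : vectType F) (u1 u2 u3 : vT) : 'I_7 -> vT :=
  tnth [tuple u1; u2; u3; u1 + u2; u2 + u3; u1 + u2 + u3; u1 + u3].

(* X_2 = {Z1..Z5,V1..V8}, generators in this order. *)
Definition X2_gens (F : fieldType) (vT : vectType F) (u1 u2 u3 u4 u5 : vT)
    : 'I_13 -> vT :=
  tnth [tuple u1; u2; u3; u4; u5;
              u1 + u2 + u3; u3 + u4 + u5; u1 + u2; u1 + u3; u2 + u3;
              u3 + u4; u3 + u5; u4 + u5].

From HB Require Import structures.
From mathcomp Require Import all_boot all_order all_algebra all_field.
From mathcomp Require Import all_classical all_reals topology normedtype sequences.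
From mathcomp Require Import ring zify.
Set Implicit Arguments. Unset Strict Implicit. Unset Printing Implicit Defensive.
Import Order.TTheory GRing.Theory Num.Theory.
Import numFieldNormedType.Exports.
Local Open Scope ring_scope.

(* Phi_1 is the Fano configuration and Phi_2 contains the non-Fano
   configuration on Z1, Z2, Z3, V1, V3, V4, V5.  Two linear rank inequalities
   separate the characteristics: the Fano inequality holds for subspaces over
   any field with 2 <> 0, the non-Fano inequality over any field with 2 = 0.
   Each comes from a containment of subspaces built from the span K of the
   relations a + b + c = 0 (a in A, b in B, c in C), proved by dividing by 2,
   resp. by using 2 = 0; the modular law and submodularity of dimension turn
   the containment into the inequality.  Linear inequalities survive positive
   scaling and limits, so they hold for almost odd, resp. almost even,
   representable functions, whereas Phi_1 violates the Fano and Phi_2 the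
   non-Fano inequality. *)

Lemma coord_vbasis_inj (F : fieldType) (vT : vectType F) (x y : vT) :
  (forall j, coord (vbasis fullv) j x = coord (vbasis fullv) j y) -> x = y.
Proof.
move=> exy; rewrite (coord_vbasis (memvf x)) (coord_vbasis (memvf y)).
by apply: eq_bigr => i _; rewrite exy.
Qed.

(* Vector identities are checked coordinatewise, where they become ring identities. *)
Ltac vring := apply: coord_vbasis_inj => ?; rewrite ?linearE /=; ring.

Section DimensionInequalities.
Variables (F : fieldType) (vT : vectType F).
Implicit Types X Y W T Q : {vspace vT}.

Lemma dimv_cap_addv_le X Y W : (\dim (X :&: (Y + W)) <= \dim (X :&: Y) + \dim W)%N.
Proof.
have capXY : (X :&: (Y + W) :&: Y = X :&: Y)%VS.
  by rewrite -capvA (capv_idPr (addvSl Y W)).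
have sub : (X :&: (Y + W) + Y <= Y + W)%VS by rewrite subv_add capvSr addvSl.
have := dimv_sum_cap (X :&: (Y + W)) Y; rewrite capXY.
have := dimvS sub; have := dimv_sum_cap Y W; lia.
Qed.

Lemma dimv_addv_submod X (X' : {vspace vT}) Y : (X' <= X)%VS ->
  (\dim (X + Y) + \dim X' <= \dim (X' + Y) + \dim X)%N.
Proof.
move=> sX'X; have := dimv_sum_cap (X' + Y) X.
rewrite -addvA [(Y + X)%VS]addvC addvA (addv_idPr sX'X).
have : (X' <= (X' + Y) :&: X)%VS by rewrite subv_cap addvSl.
move/dimvS; lia.
Qed.

Lemma dimv_capv_submod X T W : (X <= T)%VS ->
  (\dim X + \dim (T :&: W) <= \dim (X :&: W) + \dim T)%N.
Proof.
move=> sXT; have := dimv_sum_cap X (T :&: W).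
rewrite capvA (capv_idPl sXT).
have : (X + T :&: W <= T)%VS by rewrite subv_add sXT capvSl.
move/dimvS; lia.
Qed.

Lemma dimv_cap_addv_subv_ge T X Q (Q' : {vspace vT}) :
  (Q' <= Q)%VS ->
  (\dim T + \dim (X + Q) + \dim Q' <= \dim (T :&: (X + Q')) + \dim (T + (X + Q)) + \dim Q)%N.
Proof.
move=> sQ'Q; have := dimv_sum_cap T (X + Q').
have := dimv_addv_submod X sQ'Q; rewrite ![(_ + X)%VS]addvC.
have : (T + (X + Q') <= T + (X + Q))%VS by rewrite !addvS.
move/dimvS; lia.
Qed.

End DimensionInequalities.

Section DependencySpace.
Variables (F : fieldType) (vT : vectType F).
Implicit Types A B C : {vspace vT}.

(* Spanned by the components of the relations [a + b + c = 0] with [a], [b], [c] in [A], [B], [C]. *)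
Definition dep_space A B C := (A :&: (B + C) + B :&: (A + C) + C :&: (A + B))%VS.

Lemma dim_dep_space_le A B C :
  (\dim (dep_space A B C)
    <= \dim (A :&: (B + C)) + \dim (B :&: (A + C)) + \dim (C :&: (A + B)))%N.
Proof.
have := dimv_add_leqif (A :&: (B + C) + B :&: (A + C)) (C :&: (A + B)).
have := dimv_add_leqif (A :&: (B + C)) (B :&: (A + C)).
by move=> [le1 _] [le2 _]; rewrite /dep_space; lia.
Qed.

Lemma dep_space_diff A B C a a' b b' c c' :
  a \in A -> a' \in A -> b \in B -> b' \in B -> c \in C -> c' \in C ->
  a + b + c = a' + b' + c' ->
  [/\ a - a' \in dep_space A B C, b - b' \in dep_space A B C
    & c - c' \in dep_space A B C].
Proof.
move=> aA a'A bB b'B cC c'C e.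
set x := a - a'; set y := b - b'; set z := c - c'.
have xA : x \in A := memvB aA a'A.
have yB : y \in B := memvB bB b'B.
have zC : z \in C := memvB cC c'C.
have xyz0 : x + (y + z) = 0.
  have -> : x + (y + z) = (a + b + c) - (a' + b' + c') by rewrite /x /y /z; vring.
  by rewrite e subrr.
have yzx0 : y + (x + z) = 0 by rewrite addrCA.
have zxy0 : z + (x + y) = 0 by rewrite addrC -addrA.
have in_sum (U V W : {vspace vT}) (u v w : vT) :
    u \in U -> v \in V -> w \in W -> u + (v + w) = 0 -> u \in (U :&: (V + W))%VS.
  move=> uU vV wW /eqP; rewrite addr_eq0 => /eqP uE.
  by rewrite memv_cap uU uE memvN memv_add.
split.
- by apply: (subvP (addvSl _ _)); apply: (subvP (addvSl _ _)); exact: in_sum xyz0.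
- by apply: (subvP (addvSl _ _)); apply: (subvP (addvSr _ _)); exact: in_sum yzx0.
- by apply: (subvP (addvSr _ _)); exact: in_sum zxy0.
Qed.
End DependencySpace.

Section FanoSubspaces.
Variables (F : fieldType) (vT : vectType F) (A B C P Q T S : {vspace vT}).

Local Notation K := (dep_space A B C).
Local Notation P' := (P :&: (A + B))%VS.
Local Notation Q' := (Q :&: (B + C))%VS.
Local Notation S' := (S :&: (A + C) :&: (P' + Q'))%VS.
Local Notation Z := (P :&: (B + K) + Q :&: (B + K) + K)%VS.

(* The [A]-, [B]-, [C]-components of [t] are determined modulo [K]; comparing
   the decompositions of [t] through [A + Q'], [C + P'] and [B + S'] puts [2 b] in [Z]. *)
Lemma fano_cap_double t : t \in (T :&: (A + Q') :&: (C + P') :&: (B + S'))%VS ->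
  exists2 b, t - b \in (A + C)%VS & b *+ 2 \in Z.
Proof.
move=> /memv_capP[/memv_capP[/memv_capP[_ /memv_addP[a aA [q qQ' Et1]]]
  /memv_addP[c cC [p pP' Et2]]] /memv_addP[b bB [s sS' Et3]]].
move: qQ' pP' sS' => /memv_capP[qQ /memv_addP[b1 b1B [c1 c1C Eq]]].
move=> /memv_capP[pP /memv_addP[a2 a2A [b2 b2B Ep]]].
move=> /memv_capP[/memv_capP[_ /memv_addP[a3 a3A [c3 c3C Es]]]].
move=> /memv_addP[p' /memv_capP[p'P /memv_addP[a4 a4A [b4 b4B Ep']]]].
move=> [q' /memv_capP[q'Q /memv_addP[b5 b5B [c5 c5C Eq']]] Es'].
exists b; first by rewrite Et3 (addrC b s) addrK Es memv_add.
have d1 : t = a + b1 + c1 by rewrite Et1 Eq addrA.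
have d2 : t = a2 + b2 + c by rewrite Et2 Ep addrC.
have d3 : t = a3 + b + c3 by rewrite Et3 Es; vring.
have d4 : t = a4 + (b + b4 + b5) + c5 by rewrite Et3 Es' Ep' Eq'; vring.
have b'B : b + b4 + b5 \in B by rewrite !memvD.
have [_ _ Kc1c] := dep_space_diff aA a2A b1B b2B c1C cC (etrans (esym d1) d2).
have [_ Kb1b _] := dep_space_diff aA a3A b1B bB c1C c3C (etrans (esym d1) d3).
have [Ka2a4 _ _] := dep_space_diff a2A a4A b2B b'B cC c5C (etrans (esym d2) d4).
have [_ _ Kc1c5] := dep_space_diff aA a4A b1B b'B c1C c5C (etrans (esym d1) d4).
have pp'Z : p - p' \in (P :&: (B + K))%VS.
  rewrite memv_cap memvB //=.
  have -> : p - p' = (b2 - b4) + (a2 - a4) by rewrite Ep Ep'; vring.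
  by apply: memv_add => //; exact: memvB.
have qq'Z : q - q' \in (Q :&: (B + K))%VS.
  rewrite memv_cap memvB //=.
  have -> : q - q' = (b1 - b5) + (c1 - c5) by rewrite Eq Eq'; vring.
  by apply: memv_add => //; exact: memvB.
have -> : b *+ 2 = (p - p') + (q - q') - (b1 - b) - (c1 - c).
  have -> : (p - p') + (q - q') = p + q - (p' + q') by vring.
  have pE : p = t - c by rewrite Et2 (addrC c p) addrK.
  have pqE : p' + q' = t - b by rewrite -Es' Et3 (addrC b s) addrK.
  by rewrite pE pqE Eq d1; vring.
have KZ : (K <= Z)%VS := addvSr _ _.
apply: memvB; last exact: subvP KZ _ Kc1c.
apply: memvB; last exact: subvP KZ _ Kb1b.
by apply: (subvP (addvSl _ K)); apply: memv_add.
Qed.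

Lemma fano_capv_sub : (2%:R : F) != 0 ->
  (T :&: (A + Q') :&: (C + P') :&: (B + S') <= T :&: (A + C + Z))%VS.
Proof.
move=> two_neq0; apply/subvP => t tM; have [b tbAC b2Z] := fano_cap_double tM.
move: tM => /memv_capP[/memv_capP[/memv_capP[tT _] _] _].
rewrite memv_cap tT -(subrK b t) memv_add //.
by rewrite -[b]scale1r -(mulVf two_neq0) -scalerA scaler_nat memvZ.
Qed.

Lemma nonfano_capv_sub : (2%:R : F) = 0 ->
  (S :&: (A + C) :&: (B + T :&: (A + Q') :&: (C + P')) <= S :&: (P + Q + K))%VS.
Proof.
move=> two_eq0; apply/subvP => s.
move=> /memv_capP[/memv_capP[sS /memv_addP[a3 a3A [c3 c3C Es]]]].
move=> /memv_addP[b bB [t /memv_capP[/memv_capP[_ tAQ'] tCP'] Et]].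
move: tAQ' tCP' => /memv_addP[a aA [q /memv_capP[qQ /memv_addP[b1 b1B [c1 c1C Eq]]] Et1]].
move=> /memv_addP[c cC [p /memv_capP[pP /memv_addP[a2 a2A [b2 b2B Ep]]] Et2]].
rewrite memv_cap sS /=.
have d1 : t = a + b1 + c1 by rewrite Et1 Eq addrA.
have d2 : t = a2 + b2 + c by rewrite Et2 Ep addrC.
have d3 : t = a3 + - b + c3 by rewrite -[t](addKr b) -Et Es; vring.
have [_ _ Kc1c] := dep_space_diff aA a2A b1B b2B c1C cC (etrans (esym d1) d2).
have nbB : - b \in B by rewrite memvN.
have [_ Kb1b _] := dep_space_diff aA a3A b1B nbB c1C c3C (etrans (esym d1) d3).
have sE : s = p + q + (b1 - - b) - (c1 - c) - b1 *+ 2.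
  have pE : p = t - c by rewrite Et2 (addrC c p) addrK.
  by rewrite Et pE Eq; vring.
have b1_2 : b1 *+ 2 = 0 by rewrite -scaler_nat two_eq0 scale0r.
rewrite sE b1_2 subr0 -addrA.
by apply: memv_add; [exact: memv_add | exact: memvB].
Qed.

Lemma fano_dim_lower :
  (\dim T + \dim (A + Q) + \dim (C + P) + \dim (B + S) + \dim (A + C) + \dim (P + Q)
     + 2 * \dim (B + C) + 2 * \dim (A + B)
   <= \dim (T :&: (A + Q') :&: (C + P') :&: (B + S :&: (A + C) :&: (P' + Q')))
     + \dim (T + (A + Q)) + \dim (T + (C + P)) + \dim (T + (B + S)) + \dim (S + (A + C))
     + \dim (S + (P + Q)) + 2 * \dim (Q + (B + C)) + 2 * \dim (P + (A + B)))%N.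
Proof.
have sS'S : (S :&: (A + C) :&: (P' + Q') <= S)%VS by rewrite -capvA capvSl.
have := dimv_capv_submod (B + S :&: (A + C) :&: (P' + Q')) (subv_trans (capvSl _ (C + P')) (capvSl T (A + Q'))).
have := dimv_capv_submod (C + P') (capvSl T (A + Q')).
have := dimv_cap_addv_subv_ge T A (capvSl Q (B + C)).
have := dimv_cap_addv_subv_ge T C (capvSl P (A + B)).
have := dimv_cap_addv_subv_ge T B sS'S.
have := dimv_sum_cap Q (B + C); have := dimv_sum_cap P (A + B).
have := dimv_capv_submod (P' + Q') (capvSl S (A + C)).
have := dimv_sum_cap S (A + C); have := dimv_sum_cap S (P' + Q').
have : (S + (P' + Q') <= S + (P + Q))%VS by rewrite !addvS ?capvSl.
move/dimvS.
have := dimv_addv_submod Q' (capvSl P (A + B)).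
have := dimv_addv_submod P (capvSl Q (B + C)); rewrite [(Q + P)%VS]addvC [(Q' + P)%VS]addvC.
lia.
Qed.

Lemma fano_dim_upper :
  (\dim (T :&: (A + C + (P :&: (B + K) + Q :&: (B + K) + K))) + \dim (T + (A + C))
     + \dim (P + B) + \dim (Q + B) + 9 * \dim (A + B + C)
   <= \dim T + \dim (A + C) + \dim P + \dim Q + 5 * \dim B + 3 * \dim A + 3 * \dim C
     + 3 * \dim (B + C) + 3 * \dim (A + C) + 3 * \dim (A + B))%N.
Proof.
have := dimv_cap_addv_le T (A + C) (P :&: (B + K) + Q :&: (B + K) + K).
have [+ _] := dimv_add_leqif (P :&: (B + K) + Q :&: (B + K)) K.
have [+ _] := dimv_add_leqif (P :&: (B + K)) (Q :&: (B + K)).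
have := dimv_cap_addv_le P B K; have := dimv_cap_addv_le Q B K.
have := dim_dep_space_le A B C.
have := dimv_sum_cap T (A + C); have := dimv_sum_cap P B; have := dimv_sum_cap Q B.
have := dimv_sum_cap A (B + C); rewrite [(A + (B + C))%VS]addvA.
have := dimv_sum_cap B (A + C); rewrite [(B + (A + C))%VS]addvA [(B + A)%VS]addvC.
have := dimv_sum_cap C (A + B); rewrite [(C + (A + B))%VS]addvC.
lia.
Qed.

Lemma nonfano_dim_lower :
  (\dim S + \dim (A + C) + \dim (B + T) + \dim (A + Q) + \dim (B + C) + \dim (C + P)
     + \dim (A + B)
   <= \dim (S :&: (A + C) :&: (B + T :&: (A + Q') :&: (C + P')))
     + \dim (S + (A + C)) + \dim (S + (B + T)) + \dim (T + (A + Q)) + \dim (Q + (B + C))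
     + \dim (T + (C + P)) + \dim (P + (A + B)))%N.
Proof.
have sT'T : (T :&: (A + Q') :&: (C + P') <= T)%VS.
  exact: subv_trans (capvSl _ _) (capvSl _ _).
have := dimv_capv_submod (B + T :&: (A + Q') :&: (C + P')) (capvSl S (A + C)).
have := dimv_cap_addv_subv_ge S B sT'T.
have := dimv_capv_submod (C + P') (capvSl T (A + Q')).
have := dimv_cap_addv_subv_ge T A (capvSl Q (B + C)).
have := dimv_cap_addv_subv_ge T C (capvSl P (A + B)).
have := dimv_sum_cap Q (B + C); have := dimv_sum_cap P (A + B).
have := dimv_sum_cap S (A + C).
lia.
Qed.

Lemma nonfano_dim_upper :
  (\dim (S :&: (P + Q + K)) + \dim (S + (P + Q)) + 3 * \dim (A + B + C)
   <= \dim S + \dim (P + Q) + \dim A + \dim B + \dim C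
     + \dim (B + C) + \dim (A + C) + \dim (A + B))%N.
Proof.
have := dimv_cap_addv_le S (P + Q) K.
have := dim_dep_space_le A B C.
have := dimv_sum_cap S (P + Q).
have := dimv_sum_cap A (B + C); rewrite [(A + (B + C))%VS]addvA.
have := dimv_sum_cap B (A + C); rewrite [(B + (A + C))%VS]addvA [(B + A)%VS]addvC.
have := dimv_sum_cap C (A + B); rewrite [(C + (A + B))%VS]addvC.
lia.
Qed.

End FanoSubspaces.

Definition rank_ineq n (lhs rhs : seq (nat * {set 'I_n})) (h : {set 'I_n} -> nat) :=
  (\sum_(wX <- lhs) wX.1 * h wX.2 <= \sum_(wX <- rhs) wX.1 * h wX.2)%N.

Lemma sumv_setU (F : fieldType) (vT : vectType F) (I : finType) (X Y : {set I})
    (V : I -> {vspace vT}) :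
  (\sum_(i in X :|: Y) V i = \sum_(i in X) V i + \sum_(i in Y) V i)%VS.
Proof.
apply/eqP; rewrite eqEsubv subv_add; apply/and3P; split.
- apply/subv_sumP => i; rewrite inE => /orP[iX | iY].
    by apply: subv_trans (addvSl _ _); exact: sumv_sup iX _.
  by apply: subv_trans (addvSr _ _); exact: sumv_sup iY _.
- by apply/subv_sumP => i iX; apply: (sumv_sup i) (subvv _); rewrite inE iX.
- by apply/subv_sumP => i iY; apply: (sumv_sup i) (subvv _); rewrite inE iY orbT.
Qed.

Section FanoInequalities.
Variables (n : nat) (a b c p q t s : 'I_n).

(* The Fano and non-Fano inequalities with common terms cancelled; in the
   configurations of the theorem [a], [b], [c], [p], [q], [t], [s] index the lines
   through [u1], [u2], [u3], [u1 + u2], [u2 + u3], [u1 + u2 + u3], [u1 + u3]. *)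
Definition fano_lhs : seq (nat * {set 'I_n}) :=
  [:: (1, [set a; q]); (1, [set c; p]); (1, [set b; s]); (1, [set p; q]);
      (1, [set t; a; c]); (1, [set p; b]); (1, [set q; b]); (9, [set a; b; c])]%N.

Definition fano_rhs : seq (nat * {set 'I_n}) :=
  [:: (1, [set t; a; q]); (1, [set t; c; p]); (1, [set t; b; s]); (1, [set s; a; c]);
      (1, [set s; p; q]); (2, [set q; b; c]); (2, [set p; a; b]); (3, [set a; c]);
      (1, [set p]); (1, [set q]); (5, [set b]); (3, [set a]); (3, [set c]);
      (1, [set b; c]); (1, [set a; b])]%N.

Definition nonfano_lhs : seq (nat * {set 'I_n}) :=
  [:: (1, [set b; t]); (1, [set a; q]); (1, [set c; p]); (1, [set s; p; q]);
      (3, [set a; b; c])]%N.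

Definition nonfano_rhs : seq (nat * {set 'I_n}) :=
  [:: (1, [set s; a; c]); (1, [set s; b; t]); (1, [set t; a; q]); (1, [set q; b; c]);
      (1, [set t; c; p]); (1, [set p; a; b]); (1, [set p; q]); (1, [set a]);
      (1, [set b]); (1, [set c])]%N.

Variables (F : fieldType) (vT : vectType F) (V : 'I_n -> {vspace vT}).

Local Notation rank := (fun X : {set 'I_n} => \dim (\sum_(i in X) V i)%VS).

Lemma fano_rank_ineq : (2%:R : F) != 0 -> rank_ineq fano_lhs fano_rhs rank.
Proof.
move=> two_neq0; rewrite /rank_ineq !big_cons big_nil /= !sumv_setU !big_set1.
have := dimvS (fano_capv_sub (V a) (V b) (V c) (V p) (V q) (V t) (V s) two_neq0).
have := fano_dim_lower (V a) (V b) (V c) (V p) (V q) (V t) (V s).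
have := fano_dim_upper (V a) (V b) (V c) (V p) (V q) (V t).
rewrite !addvA; lia.
Qed.

Lemma nonfano_rank_ineq : (2%:R : F) = 0 -> rank_ineq nonfano_lhs nonfano_rhs rank.
Proof.
move=> two_eq0; rewrite /rank_ineq !big_cons big_nil /= !sumv_setU !big_set1.
have := dimvS (nonfano_capv_sub (V a) (V b) (V c) (V p) (V q) (V t) (V s) two_eq0).
have := nonfano_dim_lower (V a) (V b) (V c) (V p) (V q) (V t) (V s).
have := nonfano_dim_upper (V a) (V b) (V c) (V p) (V q) (V s).
rewrite !addvA; lia.
Qed.

End FanoInequalities.

Section RankInequalityLimits.
Local Open Scope classical_set_scope.
Variables (R : realType) (n : nat) (g : nat -> {set 'I_n} -> nat) (c : nat -> R).
Variable h : {set 'I_n} -> nat.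
Hypothesis cvg_gh : forall A, (fun k => c k * (g k A)%:R) @ \oo --> ((h A)%:R : R).

Lemma cvg_weighted_sum (s : seq (nat * {set 'I_n})) :
  (fun k => c k * (\sum_(wX <- s) wX.1 * g k wX.2)%:R) @ \oo
    --> ((\sum_(wX <- s) wX.1 * h wX.2)%:R : R).
Proof.
elim: s => [|[w X] s IHs].
  under eq_fun do rewrite big_nil mulr0.
  by rewrite big_nil; exact: cvg_cst.
under eq_fun do rewrite big_cons natrD natrM mulrDr mulrCA.
by rewrite big_cons natrD natrM; apply: cvgD IHs; apply: cvgMl_tmp.
Qed.

Lemma rank_ineq_limit lhs rhs :
  (forall k, 0 < c k) -> (forall k, rank_ineq lhs rhs (g k)) -> rank_ineq lhs rhs h.
Proof.
move=> c_gt0 ineq_g; rewrite /rank_ineq -(ler_nat R).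
apply: ler_cvg_to (cvg_weighted_sum (s := lhs)) (cvg_weighted_sum (s := rhs)) _.
by apply: nearW => k; rewrite ler_pM2l ?c_gt0 // ler_nat; exact: ineq_g.
Qed.

End RankInequalityLimits.

Section Lines.
Variables (F : fieldType) (vT : vectType F).

Lemma dim_vline_le1 (x : vT) : (\dim <[x]> <= 1)%N.
Proof. by rewrite dim_vline leq_b1. Qed.

Lemma dim_addv_vline_le (X : {vspace vT}) (z : vT) : (\dim (X + <[z]>) <= \dim X + 1)%N.
Proof.
have [+ _] := dimv_add_leqif X <[z]>.
by have := dim_vline_le1 z; lia.
Qed.

Lemma dim_two_lines_le2 (x y : vT) : (\dim (<[x]> + <[y]>) <= 2)%N.
Proof. by have := dim_addv_vline_le <[x]> y; have := dim_vline_le1 x; lia. Qed.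

Lemma dim_collinear_le2 (x y z : vT) :
  x \in (<[y]> + <[z]>)%VS -> (\dim (<[x]> + <[y]> + <[z]>) <= 2)%N.
Proof.
by move=> xyz; rewrite -addvA (addv_idPr xyz) dim_two_lines_le2.
Qed.


Lemma memv_eq (W : {vspace vT}) (x y : vT) :
  x = y -> y \in W -> x \in W.
Proof. by move->. Qed.

End Lines.

Ltac in_line := first
  [ apply: memv_line
  | apply: (subvP (addvSl _ _)); in_line
  | apply: (subvP (addvSr _ _)); in_line ].

Ltac in_lines := first
  [ in_line
  | match goal with |- context [ <[?y]>%VS ] => match goal with |- context [ <[?z]>%VS ] =>
      apply: (memv_eq (y := y + z)); [vring | apply: memvD; in_line] end end
  | match goal with |- context [ <[?y]>%VS ] => match goal with |- context [ <[?z]>%VS ] =>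
      apply: (memv_eq (y := y - z)); [vring | apply: memvB; in_line] end end
  | match goal with |- context [ <[?y]>%VS ] => match goal with |- context [ <[?z]>%VS ] =>
    match goal with |- context [ <[?w]>%VS ] =>
      apply: (memv_eq (y := y - z - w)); [vring | apply: memvB; [apply: memvB |]; in_line]
    end end end ].

Section FanoConfiguration.
Variables (F : fieldType) (vT : vectType F) (u1 u2 u3 : vT).
Hypothesis u_free : free [:: u1; u2; u3].

(* Lemma names list the points involved, named as in [fano_lhs]. *)

Lemma dim_ge3_of_span (X : {vspace vT}) :
  u1 \in X -> u2 \in X -> u3 \in X -> (3 <= \dim X)%N.
Proof.
move=> u1X u2X u3X; rewrite -[3%N]/(size [:: u1; u2; u3]) -(eqP u_free).
apply: dimvS; apply/span_subvP => v; rewrite !inE.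
by case/or3P => /eqP ->.
Qed.

Lemma dim_ge2_of_span (x y z : vT) :
  u1 \in (<[x]> + <[y]> + <[z]>)%VS -> u2 \in (<[x]> + <[y]> + <[z]>)%VS ->
  u3 \in (<[x]> + <[y]> + <[z]>)%VS -> (2 <= \dim (<[x]> + <[y]>))%N.
Proof.
move=> u1W u2W u3W; have := dim_ge3_of_span u1W u2W u3W.
have := dim_addv_vline_le (<[x]> + <[y]>) z; lia.
Qed.

Ltac completed_by z := apply: (@dim_ge2_of_span _ _ z); in_lines.

Lemma dim_aq : (2 <= \dim (<[u1]> + <[u2 + u3]>))%N. Proof. completed_by u2. Qed.
Lemma dim_cp : (2 <= \dim (<[u3]> + <[u1 + u2]>))%N. Proof. completed_by u1. Qed.
Lemma dim_bs : (2 <= \dim (<[u2]> + <[u1 + u3]>))%N. Proof. completed_by u1. Qed.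
Lemma dim_pq : (2 <= \dim (<[u1 + u2]> + <[u2 + u3]>))%N. Proof. completed_by u2. Qed.
Lemma dim_pb : (2 <= \dim (<[u1 + u2]> + <[u2]>))%N. Proof. completed_by u3. Qed.
Lemma dim_qb : (2 <= \dim (<[u2 + u3]> + <[u2]>))%N. Proof. completed_by u1. Qed.
Lemma dim_bt : (2 <= \dim (<[u2]> + <[u1 + u2 + u3]>))%N. Proof. completed_by u1. Qed.
Lemma dim_tac : (3 <= \dim (<[u1 + u2 + u3]> + <[u1]> + <[u3]>))%N.
Proof. by apply: dim_ge3_of_span; in_lines. Qed.
Lemma dim_abc : (3 <= \dim (<[u1]> + <[u2]> + <[u3]>))%N.
Proof. by apply: dim_ge3_of_span; in_lines. Qed.

Ltac collinear := apply: dim_collinear_le2; in_lines.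

Lemma dim_taq : (\dim (<[u1 + u2 + u3]> + <[u1]> + <[u2 + u3]>) <= 2)%N.
Proof. collinear. Qed.
Lemma dim_tcp : (\dim (<[u1 + u2 + u3]> + <[u3]> + <[u1 + u2]>) <= 2)%N.
Proof. collinear. Qed.
Lemma dim_tbs : (\dim (<[u1 + u2 + u3]> + <[u2]> + <[u1 + u3]>) <= 2)%N.
Proof. collinear. Qed.
Lemma dim_sbt : (\dim (<[u1 + u3]> + <[u2]> + <[u1 + u2 + u3]>) <= 2)%N.
Proof. collinear. Qed.
Lemma dim_sac : (\dim (<[u1 + u3]> + <[u1]> + <[u3]>) <= 2)%N.
Proof. collinear. Qed.
Lemma dim_qbc : (\dim (<[u2 + u3]> + <[u2]> + <[u3]>) <= 2)%N.
Proof. collinear. Qed.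
Lemma dim_pab : (\dim (<[u1 + u2]> + <[u1]> + <[u2]>) <= 2)%N.
Proof. collinear. Qed.

(* In characteristic 2 the points [s], [p], [q] are collinear: the Fano plane. *)
Lemma dim_spq_char2 : (2%:R : F) = 0 ->
  (\dim (<[u1 + u3]> + <[u1 + u2]> + <[u2 + u3]>) <= 2)%N.
Proof.
move=> two_eq0; apply: dim_collinear_le2.
have -> : u1 + u3 = (u1 + u2) + (u2 + u3) - 2%:R *: u2 by rewrite scaler_nat; vring.
by rewrite two_eq0 scale0r subr0; apply: memv_add; apply: memv_line.
Qed.

Lemma dim_spq_ge3 : (2%:R : F) != 0 ->
  (3 <= \dim (<[u1 + u3]> + <[u1 + u2]> + <[u2 + u3]>))%N.
Proof.
move=> two_neq0; set W := (<[u1 + u3]> + <[u1 + u2]> + <[u2 + u3]>)%VS.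
have u1W : u1 \in W.
  have -> : u1 = 2%:R^-1 *: (u1 *+ 2) by rewrite -scaler_nat scalerA mulVf ?scale1r.
  have -> : u1 *+ 2 = (u1 + u3) + (u1 + u2) - (u2 + u3) by vring.
  by apply: memvZ; apply: memvB; [apply: memvD |]; in_line.
apply: dim_ge3_of_span => //.
  by apply: (memv_eq (y := (u1 + u2) - u1)); [vring | apply: memvB => //; in_line].
by apply: (memv_eq (y := (u1 + u3) - u1)); [vring | apply: memvB => //; in_line].
Qed.

End FanoConfiguration.

Section Violations.
Variables (F : fieldType) (vT : vectType F) (n : nat) (w : 'I_n -> vT).
Variables (a b c p q t s : 'I_n).
Hypothesis abc_free : free [:: w a; w b; w c].
Hypotheses (wp : w p = w a + w b) (wq : w q = w b + w c).
Hypotheses (wt : w t = w a + w b + w c) (ws : w s = w a + w c).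

Lemma fano_ineq_violated : (2%:R : F) = 0 ->
  ~ rank_ineq (fano_lhs a b c p q t s) (fano_rhs a b c p q t s) (span_rank w).
Proof.
move=> two_eq0; rewrite /rank_ineq /span_rank !big_cons big_nil /=.
rewrite !sumv_setU !big_set1 wp wq wt ws.
move: (w a) (w b) (w c) abc_free => u1 u2 u3 u_free.
have := dim_aq u_free; have := dim_cp u_free; have := dim_bs u_free.
have := dim_pq u_free; have := dim_tac u_free; have := dim_pb u_free.
have := dim_qb u_free; have := dim_abc u_free.
have := dim_taq u1 u2 u3; have := dim_tcp u1 u2 u3; have := dim_tbs u1 u2 u3.
have := dim_sac u1 u3; have := dim_spq_char2 u1 u2 u3 two_eq0.
have := dim_qbc u2 u3; have := dim_pab u1 u2.
have := dim_two_lines_le2 u1 u3; have := dim_two_lines_le2 u2 u3.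
have := dim_two_lines_le2 u1 u2.
have := dim_vline_le1 u1; have := dim_vline_le1 u2; have := dim_vline_le1 u3.
have := dim_vline_le1 (u1 + u2); have := dim_vline_le1 (u2 + u3).
lia.
Qed.

Lemma nonfano_ineq_violated : (2%:R : F) != 0 ->
  ~ rank_ineq (nonfano_lhs a b c p q t s) (nonfano_rhs a b c p q t s) (span_rank w).
Proof.
move=> two_neq0; rewrite /rank_ineq /span_rank !big_cons big_nil /=.
rewrite !sumv_setU !big_set1 wp wq wt ws.
move: (w a) (w b) (w c) abc_free => u1 u2 u3 u_free.
have := dim_bt u_free; have := dim_aq u_free; have := dim_cp u_free.
have := dim_spq_ge3 u_free two_neq0; have := dim_abc u_free.
have := dim_sac u1 u3; have := dim_sbt u1 u2 u3; have := dim_taq u1 u2 u3.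
have := dim_qbc u2 u3; have := dim_tcp u1 u2 u3; have := dim_pab u1 u2.
have := dim_two_lines_le2 (u1 + u2) (u2 + u3).
have := dim_vline_le1 u1; have := dim_vline_le1 u2; have := dim_vline_le1 u3.
lia.
Qed.

End Violations.

Lemma card_pchar_expn (F : finFieldType) p :
  p \in [pchar F] -> exists2 m, (0 < m)%N & #|F| = (p ^ m)%N.
Proof.
move=> pF; have cardF := card_pprimeChar pF; exists (logn p #|F|) => //.
by move: cardF; case: (logn p #|F|) => // cardF; have := finNzRing_gt1 F; rewrite cardF.
Qed.

Lemma span_rank_representable (F : finFieldType) (vT : vectType F) n (w : 'I_n -> vT) :
  q_representable #|F| (span_rank w).
Proof. by exists F, vT, (fun i => <[w i]>%VS). Qed.

Lemma two_neq0_of_odd_pchar (F : fieldType) p :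
  p \in [pchar F] -> odd p -> (2%:R : F) != 0.
Proof.
move=> pF p_odd; apply/negP => /eqP two_eq0.
have : 2%N \in [pchar F] by rewrite inE two_eq0 eqxx.
by rewrite (pcharf_eq pF) inE => /eqP p2; rewrite -p2 in p_odd.
Qed.

Section RepresentableInequalities.
Variables (n : nat) (h : {set 'I_n} -> nat) (a b c p q t s : 'I_n).

Lemma odd_representable_fano_ineq :
  odd_representable h -> rank_ineq (fano_lhs a b c p q t s) (fano_rhs a b c p q t s) h.
Proof.
move=> [r [m [r_prime r_odd _ [F [vT [V [cardF hV]]]]]]].
rewrite (funext hV); apply: fano_rank_ineq.
exact: two_neq0_of_odd_pchar (card_finPcharP cardF r_prime) r_odd.
Qed.

Lemma even_representable_nonfano_ineq :
  even_representable h ->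
  rank_ineq (nonfano_lhs a b c p q t s) (nonfano_rhs a b c p q t s) h.
Proof.
move=> [m [_ [F [vT [V [cardF hV]]]]]].
rewrite (funext hV); apply: nonfano_rank_ineq.
exact: pcharf0 (card_finPcharP cardF (isT : prime 2)).
Qed.

End RepresentableInequalities.

Lemma X1_even_not_almost_odd (R : realType) (F : finFieldType) (vT : vectType F)
    (u1 u2 u3 : vT) :
  2%N \in [pchar F] -> free [:: u1; u2; u3] ->
  even_representable (span_rank (X1_gens u1 u2 u3)) /\
  ~ almost_odd_representable (fun A => ((span_rank (X1_gens u1 u2 u3) A)%:R : R)).
Proof.
move=> two_pchar u_free; split.
  have [m m_gt0 cardF] := card_pchar_expn two_pchar.
  by exists m; split=> //; rewrite -cardF; exact: span_rank_representable.
move=> [g [c [g_odd c_gt0 g_cvg]]].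
apply: (@fano_ineq_violated _ _ _ (X1_gens u1 u2 u3) (@Ordinal 7 0 isT) (@Ordinal 7 1 isT)
  (@Ordinal 7 2 isT) (@Ordinal 7 3 isT) (@Ordinal 7 4 isT) (@Ordinal 7 5 isT)
  (@Ordinal 7 6 isT) u_free) => //; first exact: pcharf0 two_pchar.
apply: (rank_ineq_limit (h := span_rank (X1_gens u1 u2 u3)) g_cvg c_gt0) => k.
exact: odd_representable_fano_ineq.
Qed.

Lemma X2_odd_not_almost_even (R : realType) (F : finFieldType) (vT : vectType F)
    (u1 u2 u3 u4 u5 : vT) :
  (exists p : nat, p \in [pchar F] /\ odd p) -> free [:: u1; u2; u3; u4; u5] ->
  odd_representable (span_rank (X2_gens u1 u2 u3 u4 u5)) /\
  ~ almost_even_representable (fun A => ((span_rank (X2_gens u1 u2 u3 u4 u5) A)%:R : R)).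
Proof.
move=> [r [rF r_odd]] u_free; split.
  have [m m_gt0 cardF] := card_pchar_expn rF.
  exists r, m; split=> //; first exact: pcharf_prime rF.
  by rewrite -cardF; exact: span_rank_representable.
move=> [g [c [g_even c_gt0 g_cvg]]].
have u123_free := @catl_free _ _ [:: u4; u5] [:: u1; u2; u3] u_free.
apply: (@nonfano_ineq_violated _ _ _ (X2_gens u1 u2 u3 u4 u5) (@Ordinal 13 0 isT)
  (@Ordinal 13 1 isT) (@Ordinal 13 2 isT) (@Ordinal 13 7 isT) (@Ordinal 13 9 isT)
  (@Ordinal 13 5 isT) (@Ordinal 13 8 isT) u123_free) => //.
  exact: two_neq0_of_odd_pchar rF r_odd.
apply: (rank_ineq_limit (h := span_rank (X2_gens u1 u2 u3 u4 u5)) g_cvg c_gt0) => k.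
exact: even_representable_nonfano_ineq.
Qed.

Theorem theorem6 (R : realType) :
  (forall (F : finFieldType) (vT : vectType F) (u1 u2 u3 : vT),
     2%N \in [pchar F] -> free [:: u1; u2; u3] ->
     even_representable (span_rank (X1_gens u1 u2 u3)) /\
     ~ almost_odd_representable
         (fun A => ((span_rank (X1_gens u1 u2 u3) A)%:R : R)))
  /\
  (forall (F' : finFieldType) (vT : vectType F') (u1 u2 u3 u4 u5 : vT),
     (exists p : nat, p \in [pchar F'] /\ odd p) ->
     free [:: u1; u2; u3; u4; u5] ->
     odd_representable (span_rank (X2_gens u1 u2 u3 u4 u5)) /\
     ~ almost_even_representable
         (fun A => ((span_rank (X2_gens u1 u2 u3 u4 u5) A)%:R : R))).
Proof.
split=> [F vT u1 u2 u3 | F vT u1 u2 u3 u4 u5].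
  exact: X1_even_not_almost_odd.
exact: X2_odd_not_almost_even.
Qed.
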